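(* For any inclusion $\mathcal X_0\subset\mathcal X$ of finite-dimensional operator systems and every $n\in\mathbb N$, $$\mathrm{Ind}_{\mathrm{CP}}(M_n(\mathcal X):M_n(\mathcal X_0))=\mathrm{Ind}_{\mathrm{CP}}(\mathcal X:\mathcal X_0).$$
   Context: For an operator system $\mathcal X$ with unit $1$, $\mathrm{CP}(\mathcal X)$ denotes the completely positive maps $\mathcal X\to\mathcal X$ and $\mathrm{CP}_1(\mathcal X)$ the set of $\varphi\in\mathrm{CP}(\mathcal X)$ with $\varphi(\mathbb C1)\subset\mathbb C1$. For an operator subsystem $\mathcal X_0\subset\mathcal X$, $\mathrm{Ind}_{\mathrm{CP}}(\mathcal X:\mathcal X_0)=\inf\{\|\varphi(1)\|:\varphi\in\mathrm{CP}_1(\mathcal X),\ \varphi(\mathcal X)\subset\mathcal X_0,\ \varphi-\mathrm{id}_{\mathcal X}\in\mathrm{CP}(\mathcal X)\}$ ($\infty$ if empty). $M_n(\mathcal X)$ carries its natural operator system structure (equal to $M_n\otimes_{\min}\mathcal X$), with $M_n(\mathcal X_0)$ a subsystem. *)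

From HB Require Import structures.
From mathcomp Require Import all_boot all_order all_algebra.
From mathcomp Require Import complex.
From mathcomp Require Import boolp classical_sets reals constructive_ereal ereal.

Set Implicit Arguments.
Unset Strict Implicit.
Unset Printing Implicit Defensive.

Import GRing.Theory Num.Theory.
Local Open Scope ring_scope.
Local Open Scope classical_set_scope.

Section OpSys.
Variable R : realType.
Local Notation C := R[i].
Variable V : lmodType C.

Definition mxstar (st : V -> V) m n (x : 'M[V]_(m, n)) : 'M[V]_(n, m) :=
  \matrix_(i, j) st (x j i).

Definition mxconj m n (a : 'M[C]_(m, n)) : 'M[C]_(n, m) :=
  \matrix_(i, j) Num.conj (a j i).

Definition lsmul m p q (a : 'M[C]_(m, p)) (x : 'M[V]_(p, q)) : 'M[V]_(m, q) :=
  \matrix_(i, j) \sum_k a i k *: x k j.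
Definition rsmul m p q (x : 'M[V]_(m, p)) (b : 'M[C]_(p, q)) : 'M[V]_(m, q) :=
  \matrix_(i, j) \sum_k b k j *: x i k.

Definition diagunit (e : V) n : 'M[V]_n :=
  \matrix_(i, j) if i == j then e else 0.

Record opsys := OpSys {
  ostar : V -> V;
  ocone : forall n, 'M[V]_n -> Prop;
  ounit : V }.

Definition hermitian (S : opsys) n (x : 'M[V]_n) := mxstar (ostar S) x = x.

(* Choi--Effros axioms: *-vector space, matrix cones that are compatible,
   proper, consisting of hermitian elements, with e an Archimedean matrix
   order unit. *)
Definition is_opsys (S : opsys) : Prop :=
  (forall u v, ostar S (u + v) = ostar S u + ostar S v) /\
  (forall (a : C) u, ostar S (a *: u) = Num.conj a *: ostar S u) /\
  (forall u, ostar S (ostar S u) = u) /\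
  ostar S (ounit S) = ounit S /\
  (forall n (x : 'M[V]_n), ocone S x -> hermitian S x) /\
  (forall n (x y : 'M[V]_n), ocone S x -> ocone S y -> ocone S (x + y)) /\
  (forall n m (a : 'M[C]_(n, m)) (x : 'M[V]_n),
      ocone S x -> ocone S (rsmul (lsmul (mxconj a) x) a)) /\
  (forall n (x : 'M[V]_n), ocone S x -> ocone S (- x) -> x = 0) /\
  (forall n (x : 'M[V]_n), hermitian S x ->
      exists r : R, 0 < r /\ ocone S (diagunit ((r%:C)%C *: ounit S) n + x)) /\
  (forall n (x : 'M[V]_n), hermitian S x ->
      (forall r : R, 0 < r -> ocone S (diagunit ((r%:C)%C *: ounit S) n + x)) ->
      ocone S x).

Definition onorm (S : opsys) (x : V) : R :=
  inf [set t : R | 0 <= t /\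
     ocone S (\matrix_(i < 2, j < 2)
                if i == j then (t%:C)%C *: ounit S
                else if val i == 0%N then x else ostar S x)].

Definition linmap (f : V -> V) : Prop :=
  forall (a : C) u v, f (a *: u + v) = a *: f u + f v.

Definition CPmap (S : opsys) (f : V -> V) : Prop :=
  linmap f /\ forall n (x : 'M[V]_n), ocone S x -> ocone S (map_mx f x).

Definition CP1map (S : opsys) (f : V -> V) : Prop :=
  CPmap S f /\ exists l : C, f (ounit S) = l *: ounit S.

(* Ind_CP(X : X0), an element of [0, +oo] (inf of the empty set is +oo) *)
Definition IndCP (S : opsys) (X0 : V -> Prop) : \bar R :=
  ereal_inf [set (onorm S (f (ounit S)))%:E | f in
    [set f : V -> V | CP1map S f /\ (forall x, X0 (f x)) /\
                      CPmap S (fun x => f x - x)]].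

End OpSys.

(* M_m(M_n(X)) identified with M_{mn}(X) via block matrices.           *)
Section MatrixOpSys.
Variable R : realType.
Local Notation C := R[i].
Variable V : lmodType C.
Variable n : nat.

Definition mxsp := 'M[V]_n.
HB.instance Definition _ := GRing.Zmodule.on mxsp.

Definition mxsp_scale (a : C) (x : mxsp) : mxsp := map_mx (fun v => a *: v) x.

Fact mxsp_scaleA a b (x : mxsp) : mxsp_scale a (mxsp_scale b x) = mxsp_scale (a * b) x.
Proof. by apply/matrixP => i j; rewrite !mxE scalerA. Qed.
Fact mxsp_scale1 (x : mxsp) : mxsp_scale 1 x = x.
Proof. by apply/matrixP => i j; rewrite !mxE scale1r. Qed.
Fact mxsp_scaleDr a (x y : mxsp) : mxsp_scale a (x + y) = mxsp_scale a x + mxsp_scale a y.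
Proof. by apply/matrixP => i j; rewrite !mxE scalerDr. Qed.
Fact mxsp_scaleDl (x : mxsp) a b : mxsp_scale (a + b) x = mxsp_scale a x + mxsp_scale b x.
Proof. by apply/matrixP => i j; rewrite !mxE scalerDl. Qed.

HB.instance Definition _ := GRing.Zmodule_isLmodule.Build C mxsp
  mxsp_scaleA mxsp_scale1 mxsp_scaleDr mxsp_scaleDl.

Definition Mn_opsys (S : opsys V) : opsys mxsp :=
  @OpSys R mxsp
    (fun x : mxsp => (mxstar (ostar S) x : mxsp))
    (fun m (x : 'M[mxsp]_m) =>
       ocone S (\mxblock_(i < m, j < m) (x i j : 'M[V]_(n, n))))
    (diagunit (ounit S) n : mxsp).

End MatrixOpSys.

From HB Require Import structures.
From mathcomp Require Import all_boot all_order all_algebra.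
From mathcomp Require Import complex.
From mathcomp Require Import boolp classical_sets reals constructive_ereal ereal.

Set Implicit Arguments.
Unset Strict Implicit.
Unset Printing Implicit Defensive.

Import GRing.Theory Num.Theory.
Local Open Scope ring_scope.

(* An admissible [f] for [X : X0] ampliates to [f (x) id_n], admissible for
   [M_n(X) : M_n(X0)].  Conversely an admissible [F] for the matrix pair
   compresses to [x |-> 1/n sum_k F(x (x) 1_n)_kk], which is again completely
   positive because both the ampliation [x |-> x (x) 1_n] and the compression
   to a diagonal entry are sums of congruences [a^* x a].  Since
   [|| y (x) 1_n || = || y ||], both transfers preserve the norm of the image
   of the unit, so the two infima are taken over the same set of reals. *)

Section Cones.
Variable R : realType.
Local Notation C := R[i].
Variables (V : lmodType C) (S : opsys V).
Hypothesis HS : is_opsys S.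
Local Notation cone := (ocone S).

Lemma ostar0 : ostar S 0 = 0.
Proof.
have [ostarD _] := HS; have := ostarD 0 0; rewrite addr0 => ostar0D.
by apply/esym/(addrI (ostar S 0)); rewrite addr0.
Qed.

Lemma ocone_congr m p (a : 'M[C]_(m, p)) (x : 'M[V]_m) :
  cone x -> cone (rsmul (lsmul (mxconj a) x) a).
Proof. by case: HS => [_ [_ [_ [_ [_ [_ [H _]]]]]]]; apply: H. Qed.

Lemma oconeD m (x y : 'M[V]_m) : cone x -> cone y -> cone (x + y).
Proof. by case: HS => [_ [_ [_ [_ [_ [H _]]]]]]; apply: H. Qed.

Lemma congr_mxE m p (a : 'M[C]_(m, p)) (x : 'M[V]_m) u v :
  rsmul (lsmul (mxconj a) x) a u v =
  \sum_s a s v *: \sum_r (Num.conj (a r u) *: x r s).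
Proof.
rewrite !mxE; apply: eq_bigr => s _; rewrite !mxE; congr (_ *: _).
by apply: eq_bigr => r _; rewrite !mxE.
Qed.

Lemma ocone_reindex m p (h : 'I_p -> 'I_m) (w : 'I_p -> C) (x : 'M[V]_m) :
  cone x -> cone (\matrix_(u, v) ((Num.conj (w u) * w v) *: x (h u) (h v))).
Proof.
pose a : 'M[C]_(m, p) := \matrix_(r, s) (if r == h s then w s else 0).
move=> /(ocone_congr a); congr cone; apply/matrixP => u v.
rewrite congr_mxE (big_only1 (h v)) => [|//|s]; last first.
  by move=> /negbTE hs _; rewrite mxE hs scale0r.
rewrite (big_only1 (h u)) => [|//|r]; last first.
  by move=> /negbTE hr _; rewrite mxE hr conjC0 scale0r.
by rewrite !mxE !eqxx scalerA mulrC.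
Qed.

Lemma ocone0 m : cone (0 : 'M[V]_m).
Proof.
have [_ [_ [_ [_ [_ [_ [_ [_ [Hunit _]]]]]]]]] := HS.
have [|r [_ /(ocone_reindex id (fun=> 0))]] := Hunit m 0.
  by apply/matrixP => i j; rewrite !mxE ostar0.
by congr cone; apply/matrixP => i j; rewrite !mxE mulr0 scale0r.
Qed.

Lemma ocone_sum m (I : finType) (F : I -> 'M[V]_m) :
  (forall i, cone (F i)) -> cone (\sum_i F i).
Proof. by move=> HF; apply: big_ind => //; [exact: ocone0 | exact: oconeD]. Qed.

Lemma ocone_scale m (c : R) (x : 'M[V]_m) :
  0 <= c -> cone x -> cone (map_mx ( *:%R (c%:C)%C) x).
Proof.
move=> c_ge0 /(ocone_reindex id (fun=> (Num.sqrt c)%:C%C)); congr cone.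
have conj_real (s : R) : Num.conj (s%:C)%C = (s%:C)%C := conjc_real s.
by apply/matrixP => i j; rewrite !mxE conj_real -rmorphM -expr2 sqr_sqrtr.
Qed.

End Cones.

Lemma mxspZE (R : realType) (V : lmodType R[i]) n a (x : mxsp V n) i j :
  (a *: x) i j = a *: x i j.
Proof. exact: mxE. Qed.

Section Ampliation.
Variable R : realType.
Local Notation C := R[i].
Variables (V : lmodType C) (S : opsys V).
Hypothesis HS : is_opsys S.
Local Notation cone := (ocone S).
Variable n : nat.

Definition ampl m (x : 'M[V]_m) : 'M[V]_(\sum_(i < m) n) :=
  \mxblock_(i < m, j < m) (diagunit (x i j) n : 'M[V]_(n, n)).

Lemma ocone_ampl m (x : 'M[V]_m) : cone x -> cone (ampl x).
Proof.
pose w k (s : 'I_(\sum_(i < m) n)) : C := if tagnat.sig2 s == k then 1 else 0.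
have -> : ampl x = \sum_(k < n) \matrix_(u, v)
    ((Num.conj (w k u) * w k v) *: x (tagnat.sig1 u) (tagnat.sig1 v)).
  apply/matrixP => u v; rewrite summxE (big_only1 (tagnat.sig2 u)) => [|//|k].
    rewrite !mxE /w eqxx conjC1 mul1r [tagnat.sig2 v == _]eq_sym.
    by case: eqP => _; rewrite ?scale1r ?scale0r.
  by rewrite eq_sym mxE /w => /negbTE ->; rewrite conjC0 mul0r scale0r.
by move=> cx; apply: (ocone_sum HS) => k; apply: (ocone_reindex HS).
Qed.

Lemma ocone_mxblock_diag m (Y : 'M['M[V]_n]_m) (k : 'I_n) :
  cone (\mxblock_(i < m, j < m) (Y i j : 'M[V]_(n, n))) ->
  cone (\matrix_(i, j) Y i j k k).
Proof.
move=> /(ocone_reindex HS (fun i => @tagnat.Rank m (fun=> n) i k) (fun=> 1)).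
have sig2_Rank i : tagnat.sig2 (@tagnat.Rank m (fun=> n) i k) = k.
  by apply: val_inj; rewrite tagnat.Rank2K.
congr cone; apply/matrixP => u v.
by rewrite !mxE !tagnat.Rank1K !sig2_Rank conjC1 mulr1 scale1r.
Qed.

Lemma ocone_amplE (n_gt0 : (0 < n)%N) m (x : 'M[V]_m) : cone (ampl x) <-> cone x.
Proof.
split=> [|/ocone_ampl//].
have -> : ampl x = \mxblock_(i < m, j < m)
    ((\matrix_(i, j) diagunit (x i j) n) i j : 'M[V]_(n, n)).
  by apply: eq_mxblock => i j; rewrite mxE.
move=> /(ocone_mxblock_diag (Ordinal n_gt0)); congr cone.
by apply/matrixP => i j; rewrite !mxE eqxx.
Qed.

Lemma onorm_diagunit (n_gt0 : (0 < n)%N) (y : V) :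
  onorm (Mn_opsys n S) (diagunit y n : mxsp V n) = onorm S y.
Proof.
rewrite /onorm; congr inf; apply/seteqP.
have blockE (t : R) : \mxblock_(i < 2, j < 2) ((\matrix_(i0 < 2, j0 < 2)
      if i0 == j0 then (t%:C)%C *: (diagunit (ounit S) n : mxsp V n)
      else if val i0 == 0%N then (diagunit y n : mxsp V n)
      else mxstar (ostar S) (diagunit y n)) i j : 'M[V]_(n, n))
  = ampl (\matrix_(i < 2, j < 2) if i == j then (t%:C)%C *: ounit S
                                 else if val i == 0%N then y else ostar S y).
  apply: eq_mxblock => i j; apply/matrixP => p q; rewrite !mxE.
  case: eqP => _; first by rewrite mxspZE !mxE; case: eqP => _; rewrite ?scaler0.
  case: eqP => _; rewrite !mxE // eq_sym; case: eqP => _ //; exact: (ostar0 HS).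
split=> t /= [t_ge0 cone_t]; split=> //.
  by move: cone_t; rewrite blockE => /(ocone_amplE n_gt0).
by rewrite blockE; apply/(ocone_amplE n_gt0).
Qed.

End Ampliation.

Lemma linmap0 (R : realType) (V : lmodType R[i]) (f : V -> V) : linmap f -> f 0 = 0.
Proof. by move=> f_lin; have := f_lin (-1) 0 0; rewrite scaler0 addr0 scaleN1r addNr. Qed.

Section DiagonalCompression.
Variable R : realType.
Local Notation C := R[i].
Variables (V : lmodType C) (S : opsys V).
Hypothesis HS : is_opsys S.
Variable n : nat.
Local Notation MS := (Mn_opsys n S).
Local Notation D x := (diagunit x n : mxsp V n).

Lemma diagunitD (x y : V) : D (x + y) = D x + D y.
Proof. by apply/matrixP => i j; rewrite !mxE; case: eqP; rewrite ?addr0. Qed.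

Lemma diagunitZ a (x : V) : D (a *: x) = a *: D x.
Proof. by apply/matrixP => i j; rewrite mxspZE !mxE; case: eqP; rewrite ?scaler0. Qed.

Lemma map_mx_diagunit (f : V -> V) (x : V) : linmap f -> map_mx f (D x) = D (f x).
Proof. by move=> /linmap0 f0; apply/matrixP => i j; rewrite !mxE; case: eqP. Qed.

Lemma CPmap_map_mx (f : V -> V) :
  CPmap S f -> CPmap MS (map_mx f : mxsp V n -> mxsp V n).
Proof.
move=> [f_lin f_cp]; split=> [a u v|m X /= /f_cp].
  by apply/matrixP => i j; rewrite !mxE f_lin.
by congr (ocone S); apply/matrixP => u v; rewrite !mxE.
Qed.

(* A left inverse of [f |-> map_mx f] that also fixes the identity map. *)
Definition mean_diag (F : mxsp V n -> mxsp V n) (x : V) : V :=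
  ((n%:R^-1 : R)%:C)%C *: \sum_(k < n) F (D x) k k.

Lemma mean_diagB (F G : mxsp V n -> mxsp V n) x :
  mean_diag (fun X => F X - G X) x = mean_diag F x - mean_diag G x.
Proof.
rewrite /mean_diag -scalerBr -sumrB; congr (_ *: _).
by apply: eq_bigr => k _; rewrite !mxE.
Qed.

Lemma mean_diag_diagunit (n_gt0 : (0 < n)%N) (F : mxsp V n -> mxsp V n) x y :
  F (D x) = D y -> mean_diag F x = y.
Proof.
move=> FDx; rewrite /mean_diag FDx (eq_bigr (fun=> y)) => [|k _]; last first.
  by rewrite mxE eqxx.
rewrite sumr_const card_ord -scaler_nat scalerA -(rmorph_nat (real_complex R)) -rmorphM.
by rewrite mulVf ?rmorph1 ?scale1r // pnatr_eq0 -lt0n.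
Qed.

Lemma CPmap_mean_diag (F : mxsp V n -> mxsp V n) :
  CPmap MS F -> CPmap S (mean_diag F).
Proof.
move=> [F_lin F_cp]; split=> [a u v|m x cx].
  rewrite /mean_diag diagunitD diagunitZ F_lin scalerA mulrC -scalerA -scalerDr.
  congr (_ *: _); rewrite scaler_sumr -big_split.
  by apply: eq_bigr => k _; rewrite !mxE.
pose X : 'M[mxsp V n]_m := \matrix_(i, j) D (x i j).
have cX : ocone MS X.
  rewrite /= (_ : \mxblock_(i, j) _ = ampl n x); first exact: ocone_ampl.
  by apply: eq_mxblock => i j; rewrite mxE.
have -> : map_mx (mean_diag F) x = map_mx ( *:%R ((n%:R^-1 : R)%:C)%C)
    (\sum_(k < n) \matrix_(i, j) (map_mx F X) i j k k).
  apply/matrixP => i j; rewrite !mxE summxE; congr (_ *: _).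
  by apply: eq_bigr => k _; rewrite !mxE.
apply: (ocone_scale HS); first by rewrite invr_ge0 ler0n.
by apply: (ocone_sum HS) => k; apply: (ocone_mxblock_diag HS); apply: F_cp.
Qed.

End DiagonalCompression.

Definition IndCP_admissible (R : realType) (V : lmodType R[i]) (S : opsys V)
    (X0 : V -> Prop) (f : V -> V) : Prop :=
  CP1map S f /\ (forall x, X0 (f x)) /\ CPmap S (fun x => f x - x).

Section IndexTransfer.
Variable R : realType.
Local Notation C := R[i].
Variables (V : vectType C) (S : opsys V) (U : {vspace V}).
Hypothesis HS : is_opsys S.
Variable n : nat.
Hypothesis n_gt0 : (0 < n)%N.
Local Notation MS := (Mn_opsys n S).
Local Notation Un := (fun x : mxsp V n => forall i j, x i j \in U).

Lemma admissible_map_mx (f : V -> V) :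
  IndCP_admissible S (fun x => x \in U) f ->
  IndCP_admissible MS Un (map_mx f : mxsp V n -> mxsp V n).
Proof.
move=> [[f_cp [l fe]] [f_U f_id]]; split; [split|split].
- exact: CPmap_map_mx.
- by exists l; rewrite /= map_mx_diagunit ?fe ?diagunitZ //; case: f_cp.
- by move=> x i j; rewrite mxE.
- rewrite (_ : (fun X => _) = map_mx (fun x => f x - x)); first exact: CPmap_map_mx.
  by apply/funext => X; apply/matrixP => i j; rewrite !mxE.
Qed.

Lemma onorm_map_mx_unit (f : V -> V) :
  linmap f -> onorm MS (map_mx f (ounit MS)) = onorm S (f (ounit S)).
Proof. by move=> f_lin; rewrite /= map_mx_diagunit // onorm_diagunit. Qed.

Lemma admissible_mean_diag (F : mxsp V n -> mxsp V n) :
  IndCP_admissible MS Un F -> IndCP_admissible S (fun x => x \in U) (mean_diag F).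
Proof.
move=> [[F_cp [l Fe]] [F_U F_id]]; split; [split|split].
- exact: CPmap_mean_diag.
- by exists l; apply: mean_diag_diagunit; rewrite // diagunitZ.
- by move=> x; rewrite memvZ // memv_suml.
- rewrite (_ : (fun x => _) = mean_diag (fun X => F X - X)).
    exact: CPmap_mean_diag.
  apply/funext => x; rewrite mean_diagB.
  by rewrite (mean_diag_diagunit n_gt0 (F := fun X => X) (erefl _)).
Qed.

Lemma onorm_mean_diag_unit (F : mxsp V n -> mxsp V n) :
  CP1map MS F -> onorm S (mean_diag F (ounit S)) = onorm MS (F (ounit MS)).
Proof.
move=> [_ [l Fe]]; rewrite Fe /= -diagunitZ onorm_diagunit //.
by rewrite (mean_diag_diagunit n_gt0 (y := l *: ounit S)) // Fe diagunitZ.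
Qed.

End IndexTransfer.

Theorem corollary3p11 (R : realType) (V : vectType R[i]) (S : opsys V)
    (U : {vspace V}) (n : nat) :
  is_opsys S ->
  ounit S \in U ->
  (forall x, x \in U -> ostar S x \in U) ->
  (0 < n)%N ->
  IndCP (Mn_opsys n S) (fun x : mxsp V n => forall i j, x i j \in U) =
  IndCP S (fun x => x \in U).
Proof.
move=> HS _ _ n_gt0; rewrite /IndCP; congr ereal_inf; apply/seteqP.
split=> _ [f f_adm <-].
- exists (mean_diag f); first exact: (admissible_mean_diag HS n_gt0).
  by rewrite (onorm_mean_diag_unit HS n_gt0 f_adm.1).
(* Without the ascription, [Qed] gets stuck in kernel conversion. *)
- exists (map_mx f : mxsp V n -> mxsp V n); first exact: admissible_map_mx.
  by case: f_adm => [[[f_lin _] _] _]; rewrite (onorm_map_mx_unit HS n_gt0 f_lin).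
Qed.
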